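(* Let $M$ be a monoid of binary relations on a finite set $Q$ and let $e,e'\in M$ be $\mathcal D$-equivalent idempotents. Then the permutation groups $G_e$ and $G_{e'}$ are equivalent.
   Context: Monoid of relations: set of relations on $Q$ containing the identity and closed under composition $mn=\{(p,q)\mid\exists r,(p,r)\in m,(r,q)\in n\}$. $\mathcal D$ is Green's relation $\mathcal L\mathcal R=\mathcal R\mathcal L$ in $M$. For an idempotent $e$, $H(e)$ is its $\mathcal H$-class (a group with identity $e$, inverses denoted $m^{-1}$), $\Gamma_e$ is the set of strongly connected components of the restriction of $e$ to its fixed points $\{q\mid (q,q)\in e\}$, and for $m\in H(e)$, $\gamma_e(m)=\{(\rho,\sigma)\in\Gamma_e^2\mid (r,s)\in m,(s,r)\in m^{-1}\text{ for some }r\in\rho,s\in\sigma\}$; $\gamma_e$ is an injective morphism into permutations of $\Gamma_e$, and $G_e=\gamma_e(H(e))$, a permutation group on $\Gamma_e$. Two permutation groups $G$ on $S$ and $G'$ on $S'$ are equivalent if there are a bijection $\theta:S\to S'$ and a group isomorphism $\alpha:G\to G'$ with $\theta(g(s))=\alpha(g)(\theta(s))$ for all $g\in G$, $s\in S$. *)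

From mathcomp Require Import all_boot.

Set Implicit Arguments. Unset Strict Implicit. Unset Printing Implicit Defensive.

Section Rel.
Variable T : finType.

Definition rcomp (m n : {set T * T}) : {set T * T} :=
  [set pq | [exists r, ((pq.1, r) \in m) && ((r, pq.2) \in n)]].

Definition rid : {set T * T} := [set pq : T * T | pq.1 == pq.2].
End Rel.

Section Monoid.
Variable Q : finType.
Variable M : {set {set Q * Q}}.

Definition is_rel_monoid : Prop :=
  rid Q \in M /\ {in M &, forall m n, rcomp m n \in M}.

(* Green's relations in M: a R b iff aM^1 = bM^1 (M is a monoid) *)
Definition Rrel (a b : {set Q * Q}) : bool :=
  [exists x in M, exists y in M, (a == rcomp b x) && (b == rcomp a y)].
Definition Lrel (a b : {set Q * Q}) : bool :=
  [exists x in M, exists y in M, (a == rcomp x b) && (b == rcomp y a)].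
Definition Hrel (a b : {set Q * Q}) : bool := Rrel a b && Lrel a b.
Definition Drel (a b : {set Q * Q}) : bool :=
  [exists c in M, Lrel a c && Rrel c b].

Definition rel_idem (e : {set Q * Q}) : bool := rcomp e e == e.

Definition Hclass (e : {set Q * Q}) : {set {set Q * Q}} :=
  [set m in M | Hrel m e].

Definition Hinv (e m n : {set Q * Q}) : bool :=
  [&& n \in Hclass e, rcomp m n == e & rcomp n m == e].

Definition fixpts (e : {set Q * Q}) : {set Q} := [set q | (q, q) \in e].

Definition erestr (e : {set Q * Q}) : rel Q :=
  fun p q => [&& p \in fixpts e, q \in fixpts e & (p, q) \in e].

Definition Gamma (e : {set Q * Q}) : {set {set Q}} :=
  [set [set q in fixpts e | connect (erestr e) p q && connect (erestr e) q p]
     | p in fixpts e].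

Definition gamma (e m : {set Q * Q}) : {set {set Q} * {set Q}} :=
  [set rs | [&& rs.1 \in Gamma e, rs.2 \in Gamma e &
     [exists n, Hinv e m n &&
        [exists r in rs.1, exists s in rs.2, ((r, s) \in m) && ((s, r) \in n)]]]].

Definition Gperm (e : {set Q * Q}) : {set {set {set Q} * {set Q}}} :=
  [set gamma e m | m in Hclass e].
End Monoid.

(* Equivalence of permutation groups G on A and G' on B (group elements are
   represented as (functional, bijective) relations; the group law is
   composition of relations). theta(g(s)) = alpha(g)(theta(s)) is expressed
   as (s,t) in g <-> (theta s, theta t) in alpha g, for s,t in A. *)
Definition perm_group_equiv (T S : finType) (A : {set T}) (G : {set {set T * T}})
    (B : {set S}) (G' : {set {set S * S}}) : Prop :=
  exists (theta : T -> S) (alpha : {set T * T} -> {set S * S}),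
    [/\ {in A &, injective theta}, theta @: A = B,
        {in G &, injective alpha}, alpha @: G = G' &
        [/\
        {in G &, forall g h, alpha (rcomp g h) = rcomp (alpha g) (alpha h)} &
        {in G, forall g : {set T * T}, {in A &, forall s t,
            ((s, t) \in g) = ((theta s, theta t) \in alpha g)}}]].

From mathcomp Require Import all_boot.
Set Implicit Arguments. Unset Strict Implicit. Unset Printing Implicit Defensive.

(* If e D e', Green's lemma provides a, b in M with  ab = e, ba = e',
   ea = a = ae' and be = b = e'b.  Such a "D-link" (record [Dlink]) gives:
   - a group isomorphism m |-> bma from H(e) onto H(e'), with inverse
     m |-> amb, that preserves inverses ([hconj_H], [hconj_Hinv], [hconjK]);
   - a bijection theta : Gamma_e -> Gamma_e', sending a component rho to the
     set of states s "linked" to some r in rho, i.e. (r,s) in a, (s,r) in b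
     ([clink]); theta(rho) is the e'-component of any such s ([clink_comp]).
   Since gamma_{e'}(bma) is the image of gamma_e(m) under theta ([gamma_hconj]),
   the map alpha induced by theta on relations ([relimg]) is the required
   isomorphism G_e -> G_e'; its compatibility with composition and with the
   action only uses injectivity of theta ([relimg_comp], [relimg_mem]). *)

Section RelAlgebra.
Variable T : finType.
Implicit Types (m n p : {set T * T}).

Lemma rcompP m n x z :
  reflect (exists y, (x, y) \in m /\ (y, z) \in n) ((x, z) \in rcomp m n).
Proof.
rewrite /rcomp inE /=; apply: (iffP existsP) => [[y /andP[]]|[y []]].
  by exists y.
by move=> xy yz; exists y; rewrite xy yz.
Qed.

Lemma rcomp_mem m n x y z : (x, y) \in m -> (y, z) \in n -> (x, z) \in rcomp m n.
Proof. by move=> xy yz; apply/rcompP; exists y. Qed.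

Lemma rcomp_mem3 m n p x y z w :
  (x, y) \in m -> (y, z) \in n -> (z, w) \in p -> (x, w) \in rcomp (rcomp m n) p.
Proof. by move=> xy yz zw; apply: rcomp_mem zw; apply: rcomp_mem yz. Qed.

Lemma rcompA m n p : rcomp (rcomp m n) p = rcomp m (rcomp n p).
Proof.
apply/setP => -[x w]; apply/rcompP/rcompP.
  by move=> [z [/rcompP[y [xy yz]] zw]]; exists y; split=> //; apply: rcomp_mem zw.
by move=> [y [xy /rcompP[z [yz zw]]]]; exists z; split=> //; apply: rcomp_mem yz.
Qed.

Definition rtrans m := forall x y z, (x, y) \in m -> (y, z) \in m -> (x, z) \in m.

Lemma idem_trans m : rcomp m m = m -> rtrans m.
Proof. by move=> mm x y z xy yz; rewrite -mm; apply: rcomp_mem yz. Qed.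
End RelAlgebra.

(* For a transitive relation e, two fixed points lie in the same strongly
   connected component of e restricted to its fixed points iff they are
   related both ways by e; hence the elements of Gamma_e are e-cliques. *)
Section Components.
Variables (T : finType) (e : {set T * T}).
Hypothesis e_trans : rtrans e.

Definition comp (p : T) : {set T} :=
  [set q in fixpts e | connect (erestr e) p q && connect (erestr e) q p].

Lemma reach_in p q : p \in fixpts e -> connect (erestr e) p q -> (p, q) \in e.
Proof.
rewrite inE => pp /connectP[s ps ->].
have reach x t : (p, x) \in e -> path (erestr e) x t -> (p, last x t) \in e.
  elim: t x => [//|y t IH] x px /= /andP[/and3P[_ _ xy] yt].
  exact: IH (e_trans px xy) yt.
exact: reach pp ps.
Qed.

Lemma in_comp p q : p \in fixpts e ->
  (q \in comp p) = [&& q \in fixpts e, (p, q) \in e & (q, p) \in e].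
Proof.
move=> pf; rewrite inE; case qf: (q \in fixpts e) => //=.
apply/andP/andP => -[pq qp]; first by split; apply: reach_in.
by split; apply: connect1; rewrite /erestr pf qf.
Qed.

Lemma comp_self p : p \in fixpts e -> p \in comp p.
Proof. by move=> pf; rewrite in_comp // pf; rewrite inE in pf; rewrite pf. Qed.

Lemma comp_Gamma p : p \in fixpts e -> comp p \in Gamma e.
Proof. exact: imset_f. Qed.

Lemma Gamma_comp rho r : rho \in Gamma e -> r \in rho -> comp r = rho.
Proof.
move=> /imsetP[p pf ->]; rewrite -/(comp p) in_comp // => /and3P[rf pr rp].
apply/setP => q; rewrite !in_comp //; case: (q \in fixpts e) => //=.
apply/andP/andP => -[xq qx]; split;
  [exact: e_trans pr xq | exact: e_trans qx rp
  | exact: e_trans rp xq | exact: e_trans qx pr].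
Qed.

Lemma Gamma_link rho r s : rho \in Gamma e -> r \in rho -> s \in rho -> (r, s) \in e.
Proof.
move=> Grho rrho; rewrite -(Gamma_comp Grho rrho).
have rf : r \in fixpts e by case/imsetP: Grho rrho => p _ ->; rewrite inE => /andP[].
by rewrite in_comp // => /and3P[].
Qed.

Lemma Gamma_neq0 rho : rho \in Gamma e -> exists r, r \in rho.
Proof. by move=> /imsetP[p pf ->]; exists p; rewrite inE pf !connect0. Qed.
End Components.

Section RelImage.
Variables (T S : finType) (A : {set T}) (th : T -> S).
Hypothesis th_inj : {in A &, injective th}.
Implicit Types g h : {set T * T}.

Definition relimg (g : {set T * T}) : {set S * S} := [set (th x.1, th x.2) | x in g].

Lemma relimg_mem g s t : g \subset setX A A -> s \in A -> t \in A ->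
  ((s, t) \in g) = ((th s, th t) \in relimg g).
Proof.
move=> gA sA tA; apply/idP/imsetP => [st|[[x y] xy [/= E1 E2]]].
  by exists (s, t).
have /setXP[xA yA] := subsetP gA _ xy.
by rewrite (th_inj sA xA E1) (th_inj tA yA E2).
Qed.

Lemma relimg_comp g h : g \subset setX A A -> h \subset setX A A ->
  relimg (rcomp g h) = rcomp (relimg g) (relimg h).
Proof.
move=> gA hA; apply/setP => -[p q]; apply/imsetP/rcompP.
  case=> -[x z] /rcompP[y [xy yz]] [-> ->] /=.
  by exists (th y); split; apply/imsetP; [exists (x, y) | exists (y, z)].
case=> _ [/imsetP[[x y] xy [-> ->]] /imsetP[[y' z] yz [/= yy' ->]]].
have /setXP[_ yA] := subsetP gA _ xy; have /setXP[y'A _] := subsetP hA _ yz.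
exists (x, z) => //; apply: rcomp_mem xy _.
by rewrite (th_inj yA y'A yy').
Qed.

Lemma relimg_inj g h : g \subset setX A A -> h \subset setX A A ->
  relimg g = relimg h -> g = h.
Proof.
have sub (g1 g2 : {set T * T}) : g1 \subset setX A A -> g2 \subset setX A A ->
    relimg g1 = relimg g2 -> {subset g1 <= g2}.
  move=> g1A g2A E [s t] st; have /setXP[sA tA] := subsetP g1A _ st.
  by rewrite (relimg_mem g2A sA tA) -E -relimg_mem.
move=> gA hA E; apply/eqP; rewrite eqEsubset.
by apply/andP; split; apply/subsetP; [exact: sub gA hA E | exact: sub hA gA (esym E)].
Qed.
End RelImage.

Lemma HclassP {Q : finType} {M : {set {set Q * Q}}} {e m : {set Q * Q}} :
  rcomp e e = e ->
  reflect [/\ m \in M, rcomp e m = m, rcomp m e = m,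
              exists2 y, y \in M & rcomp m y = e &
              exists2 z, z \in M & rcomp z m = e]
          (m \in Hclass M e).
Proof.
move=> ee; rewrite inE; apply: (iffP andP).
  case=> mM /andP[/existsP[x /andP[_ /existsP[y /andP[yM /andP[/eqP mx /eqP/esym my]]]]]
                 /existsP[x' /andP[_ /existsP[z /andP[zM /andP[/eqP mx' /eqP/esym zm]]]]]].
  split=> //; [by rewrite mx -rcompA ee | by rewrite mx' rcompA ee
              | by exists y | by exists z].
case=> mM em me [y yM my] [z zM zm]; split=> //; apply/andP; split.
  by apply/existsP; exists m; rewrite mM; apply/existsP; exists y; rewrite yM em my !eqxx.
by apply/existsP; exists m; rewrite mM; apply/existsP; exists z; rewrite zM me zm !eqxx.
Qed.

Record Dlink (Q : finType) (M : {set {set Q * Q}}) (e e' a b : {set Q * Q}) : Prop :=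
  DLink {
    dl_monoid : is_rel_monoid M;
    dl_aM : a \in M;  dl_bM : b \in M;
    dl_idem : rcomp e e = e;  dl_idem' : rcomp e' e' = e';
    dl_ab : rcomp a b = e;  dl_ba : rcomp b a = e';
    dl_ea : rcomp e a = a;  dl_ae' : rcomp a e' = a;
    dl_be : rcomp b e = b;  dl_e'b : rcomp e' b = b }.

Lemma Dlink_sym (Q : finType) (M : {set {set Q * Q}}) (e e' a b : {set Q * Q}) :
  Dlink M e e' a b -> Dlink M e' e b a.
Proof. by case=> *; split. Qed.

(* D-equivalent idempotents are D-linked: if e L c R e' with e = xc and
   e' = cv, take a = xe' and b = c. *)
Lemma Drel_link (Q : finType) (M : {set {set Q * Q}}) (e e' : {set Q * Q}) :
  is_rel_monoid M -> e' \in M -> rcomp e e = e -> rcomp e' e' = e' ->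
  Drel M e e' -> exists a b, Dlink M e e' a b.
Proof.
move=> HM e'M ee e'e' /existsP[c /andP[cM /andP[]]].
case/existsP=> x /andP[xM /existsP[y /andP[_ /andP[/eqP exc /eqP cye]]]].
case/existsP=> u /andP[_ /existsP[v /andP[_ /andP[/eqP ceu /eqP e'cv]]]].
have ce : rcomp c e = c by rewrite cye rcompA ee.
have e'c : rcomp e' c = c by rewrite ceu -rcompA e'e'.
have cxe' : rcomp c (rcomp x e') = e'.
  by rewrite {1}e'cv -(rcompA x c) -exc -rcompA ce -e'cv.
exists (rcomp x e'), c; split=> //.
- by case: HM => _ ->.
- by rewrite rcompA e'c.
- by rewrite exc rcompA cxe'.
- by rewrite rcompA e'e'.
Qed.

Definition hconj (T : finType) (a b m : {set T * T}) : {set T * T} :=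
  rcomp (rcomp b m) a.

Definition clink (T : finType) (a b : {set T * T}) (rho : {set T}) : {set T} :=
  [set s | [exists r in rho, ((r, s) \in a) && ((s, r) \in b)]].

Section Transport.
Variables (Q : finType) (M : {set {set Q * Q}}) (e e' a b : {set Q * Q}).
Hypothesis L : Dlink M e e' a b.

Let e_trans : rtrans e := idem_trans (dl_idem L).
Let e'_trans : rtrans e' := idem_trans (dl_idem' L).

Lemma hconj_M m : m \in M -> hconj a b m \in M.
Proof.
have [_ MM] := dl_monoid L.
by move=> mM; rewrite /hconj !MM // ?(dl_aM L) ?(dl_bM L).
Qed.

Lemma hconjM m n : rcomp (rcomp m e) n = rcomp m n ->
  rcomp (hconj a b m) (hconj a b n) = hconj a b (rcomp m n).
Proof. by move=> men; rewrite /hconj -men !rcompA -(rcompA a b) (dl_ab L). Qed.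

Lemma hconj_e : hconj a b e = e'.
Proof. by rewrite /hconj (dl_be L) (dl_ba L). Qed.

Lemma hconj_H m : m \in Hclass M e -> hconj a b m \in Hclass M e'.
Proof.
case/(HclassP (dl_idem L)) => mM em me [y yM my] [z zM zm].
apply/(HclassP (dl_idem' L)); split.
- exact: hconj_M.
- by rewrite /hconj -!rcompA (dl_e'b L).
- by rewrite /hconj !rcompA (dl_ae' L).
- exists (hconj a b y); first exact: hconj_M.
  by rewrite hconjM ?me // my hconj_e.
- exists (hconj a b z); first exact: hconj_M.
  by rewrite hconjM ?rcompA ?em // zm hconj_e.
Qed.

Lemma hconj_Hinv m n : Hinv M e m n -> Hinv M e' (hconj a b m) (hconj a b n).
Proof.
case/and3P=> nH /eqP mn /eqP nm.
have [_ en ne _ _] := HclassP (dl_idem L) nH.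
apply/and3P; split; first exact: hconj_H.
  by rewrite hconjM ?rcompA ?en // mn hconj_e.
by rewrite hconjM ?ne // nm hconj_e.
Qed.

Lemma hconjK m : m \in Hclass M e -> hconj b a (hconj a b m) = m.
Proof.
case/(HclassP (dl_idem L)) => _ em me _ _.
by rewrite /hconj !rcompA -(rcompA a b) !(dl_ab L) me em.
Qed.

Lemma link_exists r : (r, r) \in e -> exists s, (r, s) \in a /\ (s, r) \in b.
Proof. by rewrite -(dl_ab L) => /rcompP. Qed.

Lemma link_fix r s : (r, s) \in a -> (s, r) \in b -> s \in fixpts e'.
Proof. by move=> rs sr; rewrite inE -(dl_ba L); apply: rcomp_mem rs. Qed.

Lemma clink_comp rho r s : rho \in Gamma e -> r \in rho ->
  (r, s) \in a -> (s, r) \in b -> clink a b rho = comp e' s.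
Proof.
move=> Grho rrho rs sr; apply/setP => z.
rewrite in_comp ?(link_fix rs sr) // inE.
apply/existsP/and3P => [[r' /andP[r'rho /andP[r'z zr']]]|[zf sz zs]].
  have rr' := Gamma_link e_trans Grho rrho r'rho.
  have r'r := Gamma_link e_trans Grho r'rho rrho.
  split; first exact: link_fix r'z zr'.
    by rewrite -(dl_ba L) -(dl_be L) (rcomp_mem3 sr rr' r'z).
  by rewrite -(dl_ba L) -(dl_be L) (rcomp_mem3 zr' r'r rs).
exists r; rewrite rrho /=; apply/andP; split.
  by rewrite -(dl_ae' L); apply: rcomp_mem sz.
by rewrite -(dl_e'b L); apply: rcomp_mem sr.
Qed.

Lemma clink_Gamma rho : rho \in Gamma e -> clink a b rho \in Gamma e'.
Proof.
move=> Grho; have [r rrho] := Gamma_neq0 Grho.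
have [s [rs sr]] := link_exists (Gamma_link e_trans Grho rrho rrho).
by rewrite (clink_comp Grho rrho rs sr) comp_Gamma // (link_fix rs sr).
Qed.

Lemma gamma_hconj_sub m rho sigma : (rho, sigma) \in gamma M e m ->
  (clink a b rho, clink a b sigma) \in gamma M e' (hconj a b m).
Proof.
rewrite inE /= => /and3P[Grho Gsigma /existsP[n /andP[mn]]].
case/existsP=> r /andP[rrho /existsP[s /andP[ssigma /andP[rs sr]]]].
have [r' [rr' r'r]] := link_exists (Gamma_link e_trans Grho rrho rrho).
have [s' [ss' s's]] := link_exists (Gamma_link e_trans Gsigma ssigma ssigma).
rewrite inE /= !clink_Gamma //=; apply/existsP; exists (hconj a b n).
rewrite hconj_Hinv //=; apply/existsP; exists r'.
rewrite inE; apply/andP; split; first by apply/existsP; exists r; rewrite rrho rr' r'r.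
apply/existsP; exists s'; rewrite inE; apply/andP; split.
  by apply/existsP; exists s; rewrite ssigma ss' s's.
by rewrite /hconj (rcomp_mem3 r'r rs ss') (rcomp_mem3 s's sr rr').
Qed.
End Transport.

Lemma gamma_sub (Q : finType) (M : {set {set Q * Q}}) (f m : {set Q * Q}) :
  gamma M f m \subset setX (Gamma f) (Gamma f).
Proof. by apply/subsetP => -[r s]; rewrite !inE /= => /and3P[-> ->]. Qed.

(* theta is invertible on Gamma_e, with inverse the link in the opposite
   direction; needed here outside the section to use the symmetric link. *)
Lemma clinkK (Q : finType) (M : {set {set Q * Q}}) (e e' a b : {set Q * Q}) rho :
  Dlink M e e' a b -> rho \in Gamma e -> clink b a (clink a b rho) = rho.
Proof.
move=> L Grho; have e_trans := idem_trans (dl_idem L).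
have e'_trans := idem_trans (dl_idem' L).
have [r rrho] := Gamma_neq0 Grho.
have [s [rs sr]] := link_exists L (Gamma_link e_trans Grho rrho rrho).
have sf := link_fix L rs sr.
rewrite (clink_comp L Grho rrho rs sr).
rewrite (clink_comp (Dlink_sym L) (comp_Gamma sf) (comp_self e'_trans sf) sr rs).
exact: Gamma_comp.
Qed.

Section Equivalence.
Variables (Q : finType) (M : {set {set Q * Q}}) (e e' a b : {set Q * Q}).
Hypothesis L : Dlink M e e' a b.

Lemma clink_inj : {in Gamma e &, injective (clink a b)}.
Proof. by move=> rho sigma Grho Gsigma E; rewrite -(clinkK L Grho) E (clinkK L). Qed.

Lemma clink_onto : clink a b @: Gamma e = Gamma e'.
Proof.
apply/setP => sigma; apply/imsetP/idP => [[rho Grho ->]|Gsigma].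
  exact: (clink_Gamma L Grho).
exists (clink b a sigma); first exact: (clink_Gamma (Dlink_sym L) Gsigma).
by rewrite (clinkK (Dlink_sym L)).
Qed.

Lemma gamma_hconj m : m \in Hclass M e ->
  relimg (clink a b) (gamma M e m) = gamma M e' (hconj a b m).
Proof.
move=> mH; apply/setP => -[sigma tau]; apply/imsetP/idP.
  by move=> [[rho1 rho2] rho12 [-> ->]]; exact: (gamma_hconj_sub L).
move=> st; have /setXP[Gsigma Gtau] := subsetP (gamma_sub M e' _) _ st.
have := gamma_hconj_sub (Dlink_sym L) st; rewrite (hconjK L mH) => st'.
by exists (clink b a sigma, clink b a tau); rewrite //= !(clinkK (Dlink_sym L)).
Qed.

Lemma Gperm_image : relimg (clink a b) @: Gperm M e = Gperm M e'.
Proof.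
apply/setP => g; apply/imsetP/imsetP => [[_ /imsetP[m mH ->] ->]|[m' m'H ->]].
  by exists (hconj a b m); [exact: (hconj_H L mH) | exact: gamma_hconj].
exists (gamma M e (hconj b a m')).
  by apply: imset_f; exact: (hconj_H (Dlink_sym L) m'H).
by rewrite gamma_hconj ?(hconj_H (Dlink_sym L)) // (hconjK (Dlink_sym L)).
Qed.
End Equivalence.

Theorem mainTheorem9 (Q : finType) (M : {set {set Q * Q}}) (e e' : {set Q * Q}) :
  is_rel_monoid M ->
  e \in M -> e' \in M ->
  rel_idem e -> rel_idem e' ->
  Drel M e e' ->
  perm_group_equiv (Gamma e) (Gperm M e) (Gamma e') (Gperm M e').
Proof.
move=> HM _ e'M /eqP ee /eqP e'e' D.
have [a [b L]] := Drel_link HM e'M ee e'e' D.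
have th_inj := clink_inj L.
have GA g : g \in Gperm M e -> g \subset setX (Gamma e) (Gamma e).
  by move=> /imsetP[m _ ->]; exact: gamma_sub.
exists (clink a b), (relimg (clink a b)); split=> //.
- exact: (clink_onto L).
- by move=> g h /GA gA /GA hA; exact: (relimg_inj th_inj gA hA).
- exact: (Gperm_image L).
split=> [g h /GA gA /GA hA | g /GA gA s t sA tA].
  exact: (relimg_comp th_inj gA hA).
exact: (relimg_mem th_inj gA sA tA).
Qed.
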